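(* Let $v=(v_j)_{j\in\mathbb{N}}\in\mathbb{R}^{\mathbb{N}}$, $\omega_0\in\mathbb{R}^n$ and $m\in\mathbb{N}$. If there exists an integer $i\ge1$ such that $CB^{m+1}P_{i-1}(v)\omega_0\neq0$, then there exists $k_0\in\mathbb{N}$ such that for every integer $N\ge1$, the map $\phi:\mathbb{R}^{k_0+N}\to\mathbb{R}^N$, \[ \phi(w)=\big(CB^mP_{k_0}(w)\omega_0,\dots,CB^mP_{k_0+N-1}(w)\omega_0\big), \] has a differential of rank $N$ at $(v_0,\dots,v_{k_0+N-1})$.
   Context: Let $n\ge1$, $A,B\in\mathrm{End}(\mathbb{R}^n)$, $C\in\mathcal{L}(\mathbb{R}^n,\mathbb{R})$. Polynomials have commuting scalar indeterminates $X_0,X_1,\dots$ and coefficients in $\mathrm{End}(\mathbb{R}^n)$. Define the linear map $\Psi$ by $\Psi(P)(X_0,\dots,X_k)=P(X_0,\dots,X_{k-1})(A+X_0B)+\sum_{i=0}^{k-1}\frac{\partial P}{\partial X_i}(X_0,\dots,X_{k-1})X_{i+1}$, where $k$ is the least $\ell$ such that $P$ involves only $X_0,\dots,X_{\ell-1}$. Let $P_0=I$ and $P_{k+1}=\Psi(P_k)$, so $P_k$ is a polynomial in $X_0,\dots,X_{k-1}$. For a polynomial $P$ in $X_0,\dots,X_{k-1}$ and a sequence (or vector with at least $k$ entries) $v$, $P(v)=P(v_0,\dots,v_{k-1})$. *)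

From HB Require Import structures.
From mathcomp Require Import all_boot all_order all_algebra.
From mathcomp Require Import all_classical all_reals all_analysis.
Set Implicit Arguments. Unset Strict Implicit. Unset Printing Implicit Defensive.
Import Order.TTheory GRing.Theory Num.Theory.
Local Open Scope ring_scope.

(* A polynomial in commuting scalar indeterminates X_0, X_1, ... with
   coefficients in End(R^n) = 'M[R]_n is represented as a finite formal sum
   of terms (c, e), meaning c * X_0^(e_0) * X_1^(e_1) * ...
   (e is a seq nat of exponents, missing exponents are 0). *)
Section Polys.
Variables (R : comRingType) (n : nat).

Definition term := ('M[R]_n * seq nat)%type.
Definition mpolyM := seq term.

Definition peval (P : mpolyM) (x : nat -> R) : 'M[R]_n :=
  \sum_(t <- P) ((\prod_(i < size t.2) x i ^+ nth 0%N t.2 i) *: t.1).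

Definition pderiv (i : nat) (P : mpolyM) : mpolyM :=
  [seq ((nth 0%N t.2 i)%:R *: t.1, set_nth 0%N t.2 i (nth 0%N t.2 i).-1) | t <- P].

Definition pmulX (j : nat) (P : mpolyM) : mpolyM :=
  [seq (t.1, incr_nth t.2 j) | t <- P].

Definition pmulAXB (A B : 'M[R]_n) (P : mpolyM) : mpolyM :=
  [seq (t.1 *m A, t.2) | t <- P] ++ [seq (t.1 *m B, incr_nth t.2 0) | t <- P].

(* Psi, for a polynomial P involving only X_0, ..., X_(k-1) *)
Definition Psi (A B : 'M[R]_n) (k : nat) (P : mpolyM) : mpolyM :=
  pmulAXB A B P ++ flatten [seq pmulX i.+1 (pderiv i P) | i <- iota 0 k].

Fixpoint Pk (A B : 'M[R]_n) (k : nat) : mpolyM :=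
  match k with
  | 0 => [:: (1%:M, [::])]
  | k'.+1 => Psi A B k' (Pk A B k')
  end.

Definition mxpow (B : 'M[R]_n) (m : nat) : 'M[R]_n := iter m (mulmx B) 1%:M.

Definition CBPw (C : 'M[R]_(1, n)) (B : 'M[R]_n) (m : nat) (P : mpolyM)
  (x : nat -> R) (w0 : 'cV[R]_n) : R :=
  (C *m mxpow B m *m peval P x *m w0) 0 0.

End Polys.

Definition seq_of_row (R : ringType) (K : nat) (w : 'rV[R]_K) : nat -> R :=
  fun j => match insub j with Some i => w 0 i | None => 0 end.

(* For l >= 1 let a_l(k) = C B^m (dP_k/dX_(k-l))(v) w0, the derivative of the
   output indexed by k in the variable k - l. Differentiating the recursion
   P_(k+1) = Psi(P_k) shows that the (l-1)-th finite difference of a_l is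
   eventually C B^(m+1) P_(l-1)(v) w0, so each a_l is eventually polynomial in k,
   hence eventually zero or eventually nonzero. The hypothesis forces a_i not to
   be eventually zero; let l be the least such index. For k0 large, the minor on
   the variables k0 + j - l (j < N) is then triangular with nonzero diagonal: the
   entries off the diagonal on one side are a_l'(k) with 0 < l' < l, or
   derivatives dP_k/dX_c with c >= k, which vanish since P_k only involves
   X_0, ..., X_(k-1). *)

From HB Require Import structures.
From mathcomp Require Import all_boot all_order all_algebra.
From mathcomp Require Import all_classical all_reals all_analysis.
From mathcomp Require Import lra zify.
Import Order.TTheory GRing.Theory Num.Theory.
Import numFieldNormedType.Exports.
Set Implicit Arguments. Unset Strict Implicit. Unset Printing Implicit Defensive.
Local Open Scope ring_scope.
Local Open Scope classical_set_scope.

Section Monomials.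
Variable R : comNzRingType.
Implicit Types (s : seq nat) (x y : nat -> R).

Definition monomial s x : R := \prod_(i < size s) x i ^+ nth 0%N s i.

Lemma monomial_widen K s x : (size s <= K)%N ->
  monomial s x = \prod_(i < K) x i ^+ nth 0%N s i.
Proof.
move=> sK; rewrite /monomial (big_ord_widen K (fun i => x i ^+ nth 0%N s i) sK).
rewrite big_mkcond; apply: eq_bigr => i _; case: ltnP => // si.
by rewrite nth_default ?expr0.
Qed.

Lemma eq_monomial s s' x : (forall i, nth 0%N s i = nth 0%N s' i) ->
  monomial s x = monomial s' x.
Proof.
move=> ss'; rewrite (@monomial_widen (maxn (size s) (size s'))) ?leq_maxl //.
rewrite (@monomial_widen (maxn (size s) (size s')) s') ?leq_maxr //.
by apply: eq_bigr => i _; rewrite ss'.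
Qed.

Lemma eq_monomial_lt s x y : (forall i, (i < size s)%N -> x i = y i) ->
  monomial s x = monomial s y.
Proof. by move=> xy; apply: eq_bigr => i _; rewrite xy. Qed.

Lemma monomial_set_nth s c e x :
  monomial (set_nth 0%N s c e) x = x c ^+ e * monomial (set_nth 0%N s c 0%N) x.
Proof.
have [K sK cK] : exists2 K, forall e', (size (set_nth 0%N s c e') <= K)%N & (c < K)%N.
  by exists (maxn (size s) c.+1) => [e'|]; rewrite ?size_set_nth maxnC ?leq_maxl.
rewrite (monomial_widen _ (sK e)) (monomial_widen _ (sK 0%N)).
rewrite (bigD1 (Ordinal cK)) // [in RHS](bigD1 (Ordinal cK)) //=.
rewrite !nth_set_nth /= eqxx expr0 mul1r; congr (_ * _); apply: eq_bigr => i ic.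
have /negbTE ic' : (i : nat) != c by apply: contraNneq ic => ic; apply/eqP/val_inj.
by rewrite !nth_set_nth /= ic'.
Qed.

Lemma monomial_split s c x :
  monomial s x = x c ^+ nth 0%N s c * monomial (set_nth 0%N s c 0%N) x.
Proof.
rewrite -monomial_set_nth; apply: eq_monomial => i.
by rewrite nth_set_nth /=; case: eqVneq => [->|].
Qed.

Lemma monomial_incr_nth s j x :
  monomial (incr_nth s j) x = x j * monomial s x.
Proof.
rewrite (monomial_split _ j) [in RHS](monomial_split _ j) nth_incr_nth eqxx.
rewrite add1n exprS -mulrA; congr (_ * (_ * _)); apply: eq_monomial => i.
rewrite !nth_set_nth /= nth_incr_nth.
by case: ifP => // /negbT ij; rewrite eq_sym (negbTE ij).
Qed.

(* The factor [nth 0 s c] keeps this true when that exponent is 0 (.-1 truncates). *)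
Lemma monomial_lower_nth s c x :
  (nth 0%N s c)%:R * (x c * monomial (set_nth 0%N s c (nth 0%N s c).-1) x)
  = (nth 0%N s c)%:R * monomial s x.
Proof.
rewrite monomial_set_nth [in RHS](monomial_split _ c).
by case: (nth 0%N s c) => [|e]; rewrite ?mul0r // exprS !mulrA.
Qed.

End Monomials.

Section Evaluation.
Variables (R : comNzRingType) (n : nat).
Local Notation poly := (mpolyM R n).
Implicit Types (P Q : poly) (M : 'M[R]_n) (x : nat -> R).

Lemma pevalE P x : peval P x = \sum_(t <- P) monomial t.2 x *: t.1.
Proof. by []. Qed.

Lemma peval_nil x : peval ([::] : poly) x = 0.
Proof. by rewrite pevalE big_nil. Qed.

Lemma peval_cat P Q x : peval (P ++ Q) x = peval P x + peval Q x.
Proof. by rewrite !pevalE big_cat. Qed.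

Lemma peval_flatten (F : nat -> poly) r x :
  peval (flatten [seq F i | i <- r]) x = \sum_(i <- r) peval (F i) x.
Proof.
elim: r => [|i r IHr]; first by rewrite big_nil peval_nil.
by rewrite /= peval_cat IHr big_cons.
Qed.

Definition pconst M : poly := [:: (M, [::])].

Lemma peval_pconst M x : peval (pconst M) x = M.
Proof. by rewrite pevalE big_seq1 /monomial big_ord0 scale1r. Qed.

Lemma peval_pmulX j P x : peval (pmulX j P) x = x j *: peval P x.
Proof.
rewrite !pevalE big_map scaler_sumr; apply: eq_bigr => t _.
by rewrite monomial_incr_nth scalerA.
Qed.

Definition pmul_mxl M P : poly := [seq (M *m t.1, t.2) | t <- P].
Definition pmul_mxr M P : poly := [seq (t.1 *m M, t.2) | t <- P].

Lemma peval_pmul_mxl M P x : peval (pmul_mxl M P) x = M *m peval P x.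
Proof.
rewrite !pevalE big_map mulmx_sumr; apply: eq_bigr => t _.
by rewrite scalemxAr.
Qed.

Lemma peval_pmul_mxr M P x : peval (pmul_mxr M P) x = peval P x *m M.
Proof.
rewrite !pevalE big_map mulmx_suml; apply: eq_bigr => t _.
by rewrite scalemxAl.
Qed.

Lemma pmulAXBE A B P : pmulAXB A B P = pmul_mxr A P ++ pmulX 0 (pmul_mxr B P).
Proof. by rewrite /pmulAXB /pmulX /pmul_mxr -map_comp. Qed.

Lemma peval_pmulAXB A B P x :
  peval (pmulAXB A B P) x = peval P x *m (A + x 0%N *: B).
Proof.
by rewrite pmulAXBE peval_cat peval_pmulX !peval_pmul_mxr mulmxDr scalemxAr.
Qed.

Lemma peval_Psi A B k P x :
  peval (Psi A B k P) x = peval P x *m (A + x 0%N *: B)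
     + \sum_(i <- iota 0 k) x i.+1 *: peval (pderiv i P) x.
Proof.
rewrite /Psi peval_cat peval_pmulAXB peval_flatten.
by under eq_bigr do rewrite peval_pmulX.
Qed.

Lemma pderiv_cat c P Q : pderiv c (P ++ Q) = pderiv c P ++ pderiv c Q.
Proof. exact: map_cat. Qed.

Lemma pderiv_flatten c (F : nat -> poly) r :
  pderiv c (flatten [seq F i | i <- r]) = flatten [seq pderiv c (F i) | i <- r].
Proof. by rewrite /pderiv map_flatten -map_comp. Qed.

Lemma pderiv_pmul_mxl c M P : pderiv c (pmul_mxl M P) = pmul_mxl M (pderiv c P).
Proof.
by rewrite /pderiv /pmul_mxl -!map_comp; apply: eq_map => t /=; rewrite scalemxAr.
Qed.

Lemma pderiv_pmul_mxr c M P : pderiv c (pmul_mxr M P) = pmul_mxr M (pderiv c P).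
Proof.
by rewrite /pderiv /pmul_mxr -!map_comp; apply: eq_map => t /=; rewrite scalemxAl.
Qed.

Lemma peval_pderiv_pconst c M x : peval (pderiv c (pconst M)) x = 0.
Proof. by rewrite pevalE big_seq1 /= nth_nil scale0r scaler0. Qed.

Lemma peval_pderiv_pmulX c j P x :
  peval (pderiv c (pmulX j P)) x =
  x j *: peval (pderiv c P) x + (c == j)%:R *: peval P x.
Proof.
rewrite !pevalE /pderiv /pmulX -map_comp !big_map !scaler_sumr -big_split.
apply: eq_bigr => -[M s] _ /=; rewrite nth_incr_nth !scalerA -scalerDl.
congr (_ *: _); have [<-|jc] := eqVneq j c.
  have -> : monomial (set_nth 0%N (incr_nth s j) j (1 + nth 0%N s j).-1) x =
            monomial s x.
    apply: eq_monomial => i; rewrite nth_set_nth /= nth_incr_nth.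
    by case: ifP => [/eqP -> //|/negbT ij]; rewrite eq_sym (negbTE ij).
  rewrite add1n -natr1 mulrDr mulr1; congr (_ + _); last by rewrite mul1r.
  by rewrite mulrC -monomial_lower_nth mulrC.
rewrite add0n mul0r addr0 -monomial_incr_nth; congr (_ * _).
apply: eq_monomial => i; rewrite !nth_set_nth /= !nth_incr_nth nth_set_nth /=.
by case: (eqVneq i c) => [->|]; rewrite ?eqxx ?(negbTE jc).
Qed.

Lemma peval_pderiv_pmulAXB A B c P x :
  peval (pderiv c (pmulAXB A B P)) x =
  peval (pderiv c P) x *m (A + x 0%N *: B) + (c == 0%N)%:R *: (peval P x *m B).
Proof.
rewrite pmulAXBE pderiv_cat peval_cat peval_pderiv_pmulX !pderiv_pmul_mxr.
by rewrite !peval_pmul_mxr mulmxDr scalemxAr addrA.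
Qed.

Lemma peval_pderivC c j P x :
  peval (pderiv c (pderiv j P)) x = peval (pderiv j (pderiv c P)) x.
Proof.
rewrite !pevalE /pderiv -!map_comp !big_map; apply: eq_bigr => -[M s] _ /=.
have [->//|cj] := eqVneq c j.
rewrite !nth_set_nth /= (negbTE cj) eq_sym (negbTE cj) !scalerA -!mulrA.
rewrite [_%:R * _%:R]mulrC; congr (_ * _ *: _); apply: eq_monomial => i.
case: (eqVneq i c) => [->|/negbTE ic];
  by rewrite !nth_set_nth /= ?eqxx ?(negbTE cj) ?ic ?nth_set_nth /= ?eqxx ?ic.
Qed.

Definition pvars_lt K P := all (fun t => size t.2 <= K)%N P.

Lemma pvars_lt_le K K' P : pvars_lt K P -> (K <= K')%N -> pvars_lt K' P.
Proof. by move=> /allP PK KK'; apply/allP => t /PK /leq_trans; apply. Qed.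

Lemma pvars_lt_pderiv K c P : pvars_lt K P -> (c < K)%N -> pvars_lt K (pderiv c P).
Proof.
move=> /allP PK cK; apply/allP => _ /mapP [t /PK tK ->] /=.
by rewrite size_set_nth geq_max cK.
Qed.

Lemma pvars_lt_Pk A B k : pvars_lt k (Pk A B k).
Proof.
elim: k => [//|k IHk]; rewrite /= /Psi /pmulAXB /pvars_lt !all_cat -andbA.
have size_incr s j : (size s <= k)%N -> (j < k.+1)%N ->
    (size (incr_nth s j) <= k.+1)%N.
  by move=> sk jk; rewrite size_incr_nth; case: ifP => // _; apply: leqW.
apply/and3P; split; apply/allP.
- by move=> _ /mapP [t /(allP IHk) tk ->]; apply: leqW.
- by move=> _ /mapP [t /(allP IHk) tk ->]; apply: size_incr.
move=> _ /flattenP [_ /mapP [i ik ->]] /mapP [t ti ->].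
rewrite mem_iota add0n in ik; have /allP := pvars_lt_pderiv IHk ik.
by move=> /(_ t ti) tk; apply: size_incr.
Qed.

Lemma peval_pderiv_pvars c P x : pvars_lt c P -> peval (pderiv c P) x = 0.
Proof.
move=> /allP Pc; rewrite pevalE big_map big1_seq // => t /andP [_ /Pc tc].
by rewrite nth_default // scale0r scaler0.
Qed.

Lemma eq_peval_pvars K P x y : pvars_lt K P ->
  (forall i, (i < K)%N -> x i = y i) -> peval P x = peval P y.
Proof.
move=> /allP PK xy; rewrite !pevalE; apply: eq_big_seq => t /PK tK.
by rewrite (@eq_monomial_lt _ _ x y) // => i /leq_trans /(_ tK) /xy.
Qed.

Definition peq P Q := forall x, peval P x = peval Q x.

End Evaluation.

Section LinearForm.
Variables (R : comNzRingType) (n : nat) (u : 'rV[R]_n) (w : 'cV[R]_n).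

Definition mxform (M : 'M[R]_n) : R := (u *m M *m w) 0 0.

Lemma mxformD M N : mxform (M + N) = mxform M + mxform N.
Proof. by rewrite /mxform mulmxDr mulmxDl mxE. Qed.

Lemma mxformZ a M : mxform (a *: M) = a * mxform M.
Proof. by rewrite /mxform -scalemxAr -scalemxAl mxE. Qed.

Lemma mxform_peval (P : mpolyM R n) x :
  mxform (peval P x) = \sum_(t <- P) mxform t.1 * monomial t.2 x.
Proof.
rewrite /mxform pevalE mulmx_sumr mulmx_suml summxE; apply: eq_bigr => t _.
by rewrite -scalemxAr -scalemxAl mxE mulrC.
Qed.

End LinearForm.

Lemma mxform_delta (R : comNzRingType) n (M : 'M[R]_n) a b :
  mxform (delta_mx 0 a) (delta_mx b 0) M = M a b.
Proof. by rewrite /mxform -rowE -colE !mxE. Qed.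

Section Derivatives.
Context {R : numFieldType} {V : normedModType R}.

Lemma is_derive_prod_eq0 (z v : V) k (F : nat -> V -> R) :
  (forall i, (i < k)%N -> is_derive z v (F i) 0) ->
  is_derive z v (fun y => \prod_(i < k) F i y) 0.
Proof.
elim: k => [|k IHk] dF.
  by under eq_fun do rewrite big_ord0; exact: is_derive_cst.
under eq_fun do rewrite big_ord_recr.
have := is_deriveM (IHk (fun i ik => dF i (ltnW ik))) (dF k (ltnSn k)).
by rewrite !scaler0 addr0.
Qed.

Lemma differentiable_prod (z : V) k (F : nat -> V -> R) :
  (forall i, (i < k)%N -> differentiable (F i) z) ->
  differentiable (fun y => \prod_(i < k) F i y) z.
Proof.
elim: k => [|k IHk] dF; first by under eq_fun do rewrite big_ord0.
under eq_fun do rewrite big_ord_recr.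
exact: (differentiableM (IHk (fun i ik => dF i (ltnW ik))) (dF k (ltnSn k))).
Qed.

Lemma differentiable_mxform_peval (z : V) (X : V -> nat -> R) n
    (u : 'rV[R]_n) (w : 'cV[R]_n) (P : mpolyM R n) :
  (forall i, differentiable (X^~ i) z) ->
  differentiable (fun y => mxform u w (peval P (X y))) z.
Proof.
move=> dX; under eq_fun do rewrite mxform_peval.
elim: P => [|t P IHP]; first by under eq_fun do rewrite big_nil.
under eq_fun do rewrite big_cons.
apply: differentiableD => //.
apply: (differentiableM (f := cst _) (g := fun y => monomial t.2 (X y))) => //.
apply: (differentiable_prod (F := fun i y => X y i ^+ nth 0%N t.2 i)) => i _.
case: (nth 0%N t.2 i) => [|e]; first by under eq_fun do rewrite expr0.
by rewrite -(exprfctE (X^~ i)); apply: differentiableX.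
Qed.

Variables (z v : V) (X : V -> nat -> R) (c : nat).
Hypothesis dX : forall i, is_derive z v (X^~ i) (i == c)%:R.

Lemma is_derive_monomial_eq0 s : nth 0%N s c = 0%N ->
  is_derive z v (fun y => monomial s (X y)) 0.
Proof.
move=> sc0; apply: (is_derive_prod_eq0 (F := fun i y => X y i ^+ nth 0%N s i)).
move=> i _; have [->|ic] := eqVneq i c.
  by rewrite sc0; under eq_fun do rewrite expr0; exact: is_derive_cst.
rewrite -(exprfctE (X^~ i)).
by apply: is_derive_eq (is_deriveX _ (dX i)) _; rewrite (negbTE ic) scaler0.
Qed.

Lemma is_derive_monomial s :
  is_derive z v (fun y => monomial s (X y))
    ((nth 0%N s c)%:R * monomial (set_nth 0%N s c (nth 0%N s c).-1) (X z)).
Proof.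
have -> : (fun y => monomial s (X y)) =
    (X^~ c) ^+ nth 0%N s c * (fun y => monomial (set_nth 0%N s c 0%N) (X y)).
  by apply/funext => y; rewrite (monomial_split _ c) /= exprfctE.
have d0 := @is_derive_monomial_eq0 (set_nth 0%N s c 0%N).
rewrite nth_set_nth /= eqxx in d0.
apply: is_derive_eq (is_deriveM (is_deriveX _ (dX c)) (d0 erefl)) _.
rewrite scaler0 add0r eqxx mulr1n [in RHS]monomial_set_nth.
by rewrite /GRing.scale /= mulr1 mulrC -mulrA.
Qed.

Lemma is_derive_mxform_peval n (u : 'rV[R]_n) (w : 'cV[R]_n) (P : mpolyM R n) :
  is_derive z v (fun y => mxform u w (peval P (X y)))
    (mxform u w (peval (pderiv c P) (X z))).
Proof.
under eq_fun do rewrite mxform_peval.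
rewrite mxform_peval /pderiv big_map.
elim: P => [|t P IHP].
  by under eq_fun do rewrite big_nil; rewrite big_nil; exact: is_derive_cst.
under eq_fun do rewrite big_cons; rewrite big_cons.
apply: is_deriveD => //; apply: is_derive_eq (is_deriveZ _ (is_derive_monomial _)) _.
by rewrite /= mxformZ /GRing.scale /= mulrCA mulrA.
Qed.

End Derivatives.

(* Formal partial derivatives are the analytic ones of the evaluation map, hence
   they only depend on the evaluations. *)
Lemma peq_pderiv (R : numFieldType) n c (P Q : mpolyM R n) :
  peq P Q -> peq (pderiv c P) (pderiv c Q).
Proof.
move=> PQ x; apply/matrixP => a b; rewrite -!mxform_delta.
pose X (h : R) i := if i == c then x c + h else x i.
have dX i : is_derive (0 : R) 1 (X^~ i) (i == c)%:R.
  rewrite /X; case: eqVneq => _; last exact: is_derive_cst.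
  by apply: is_derive_eq (is_deriveD (is_derive_cst _ _ _) (is_derive_id _ _)) _;
    rewrite add0r.
have -> : x = X 0 by apply/funext => i; rewrite /X addr0; case: eqVneq => // ->.
have dP := is_derive_mxform_peval dX (delta_mx 0 a) (delta_mx b 0) P.
have dQ := is_derive_mxform_peval dX (delta_mx 0 a) (delta_mx b 0) Q.
rewrite -(@derive_val _ _ _ _ _ _ _ dP) -(@derive_val _ _ _ _ _ _ _ dQ).
by under eq_fun do rewrite PQ.
Qed.

Section PsiRecursion.
Variables (R : numFieldType) (n : nat) (A B : 'M[R]_n).
Local Notation poly := (mpolyM R n).
Local Notation P k := (Pk A B k).
Local Notation Psi := (Psi A B).
Implicit Types (Q S : poly) (x : nat -> R).

Lemma peq_Psi k Q S : peq Q S -> peq (Psi k Q) (Psi k S).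
Proof.
move=> QS x; rewrite !peval_Psi QS; congr (_ + _); apply: eq_bigr => i _.
by rewrite (peq_pderiv i QS).
Qed.

Lemma Psi_peq_nil k Q : peq Q [::] -> peq (Psi k Q) [::].
Proof.
move=> Q0 x; rewrite peval_Psi Q0 peval_nil mul0mx add0r big1 // => i _.
by rewrite (peq_pderiv i Q0) peval_nil scaler0.
Qed.

Lemma Psi_cat k Q S : peq (Psi k (Q ++ S)) (Psi k Q ++ Psi k S).
Proof.
move=> x; rewrite peval_cat !peval_Psi peval_cat mulmxDl.
under eq_bigr do rewrite pderiv_cat peval_cat scalerDr.
by rewrite big_split addrACA.
Qed.

Lemma Psi_pmul_mxl k M Q : peq (Psi k (pmul_mxl M Q)) (pmul_mxl M (Psi k Q)).
Proof.
move=> x; rewrite peval_pmul_mxl !peval_Psi peval_pmul_mxl mulmxDr mulmxA.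
congr (_ + _); rewrite mulmx_sumr; apply: eq_bigr => i _.
by rewrite pderiv_pmul_mxl peval_pmul_mxl scalemxAr.
Qed.

Lemma Psi_widen K0 K Q : (forall j, (K0 <= j)%N -> peq (pderiv j Q) [::]) ->
  (K0 <= K)%N -> peq (Psi K Q) (Psi K0 Q).
Proof.
move=> QK0 K0K x; rewrite !peval_Psi -(subnKC K0K) iotaD big_cat /= add0n.
rewrite [X in _ + (_ + X)]big1_seq ?addr0 // => j /andP [_].
by rewrite mem_iota => /andP [/QK0 -> _]; rewrite peval_nil scaler0.
Qed.

Lemma sum_iota_scale_eq (V : lmodType R) (F : nat -> V) c k :
  \sum_(i <- iota 0 k) (c == i)%:R *: F i = if (c < k)%N then F c else 0.
Proof.
elim: k => [|k IHk]; first by rewrite big_nil.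
rewrite -addn1 iotaD big_cat /= big_seq1 IHk add0n addn1 ltnS.
have [->|ck] := eqVneq c k; first by rewrite ltnn leqnn /= mulr1n scale1r add0r.
by rewrite mulr0n scale0r addr0 [in RHS]leq_eqVlt (negbTE ck).
Qed.

Lemma peval_pderiv_Psi k c Q x :
  peval (pderiv c (Psi k Q)) x =
  peval (Psi k (pderiv c Q)) x + (c == 0%N)%:R *: (peval Q x *m B)
  + (if (0 < c <= k)%N then peval (pderiv c.-1 Q) x else 0).
Proof.
rewrite /Psi pderiv_cat peval_cat peval_pderiv_pmulAXB pderiv_flatten.
rewrite peval_flatten -/(Psi k _) peval_Psi.
under eq_bigr do rewrite peval_pderiv_pmulX peval_pderivC.
rewrite big_split /=.
have -> : \sum_(i <- iota 0 k) (c == i.+1)%:R *: peval (pderiv i Q) x =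
          (if (0 < c <= k)%N then peval (pderiv c.-1 Q) x else 0).
  case: c => [|c]; first by rewrite big1 // => i _; rewrite scale0r.
  exact: (sum_iota_scale_eq (fun i => peval (pderiv i Q) x)).
by rewrite addrACA addrA.
Qed.

Lemma pderiv_Pk_ge k c : (k <= c)%N -> peq (pderiv c (P k)) [::].
Proof.
move=> kc x; rewrite peval_nil peval_pderiv_pvars //.
exact: pvars_lt_le (pvars_lt_Pk A B k) kc.
Qed.

Lemma pderiv_PkS k c : (0 < c <= k)%N ->
  peq (pderiv c (P k.+1)) (pderiv c.-1 (P k) ++ Psi k (pderiv c (P k))).
Proof.
move=> ck x; rewrite peval_pderiv_Psi ck peval_cat.
by case/andP: ck; rewrite lt0n => /negbTE -> _; rewrite scale0r addr0 addrC.
Qed.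

Lemma pderiv_Pk_last k : peq (pderiv k (P k.+1)) (pconst B).
Proof.
move=> x; elim: k => [|k IHk].
  rewrite -[Pk A B 1]/(Psi 0 (P 0)) peval_pderiv_Psi peval_pconst.
  rewrite (Psi_peq_nil _ (pderiv_Pk_ge (leqnn 0))) peval_nil add0r.
  by rewrite -[P 0]/(pconst 1%:M) peval_pconst mul1mx scale1r addr0.
rewrite (@pderiv_PkS k.+1 k.+1 (leqnn _) x) peval_cat.
by rewrite (Psi_peq_nil _ (pderiv_Pk_ge (leqnn _))) peval_nil addr0.
Qed.

Lemma pderiv_Psi_peq_nil k j Q :
  peq (pderiv j Q) [::] -> (j = 0%N -> peq Q [::]) ->
  ((0 < j)%N -> peq (pderiv j.-1 Q) [::]) -> peq (pderiv j (Psi k Q)) [::].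
Proof.
move=> Qj Q0 Qj1 x; rewrite peval_pderiv_Psi (Psi_peq_nil _ Qj) peval_nil add0r.
case: (posnP j) => [j0|j_gt0]; first by rewrite Q0 // peval_nil mul0mx scaler0 add0r.
by rewrite scale0r add0r; case: ifP => // _; rewrite Qj1 // peval_nil.
Qed.

Lemma pderiv_pderiv_Pk l m j : (0 < l)%N -> (l.-1 <= j)%N ->
  peq (pderiv j (pderiv m (P (l + m)))) [::].
Proof.
elim: l m j => [//|l IHl] m j _ lj; elim: m j lj => [|m IHm] j lj.
  move=> x; rewrite addn0 peval_pderivC; have [jl|jl] := leqP l.+1 j.
    by rewrite (peq_pderiv 0 (pderiv_Pk_ge jl)).
  have -> : j = l by apply/eqP; rewrite eqn_leq lj -ltnS jl.
  by rewrite (peq_pderiv 0 (pderiv_Pk_last l)) peval_pderiv_pconst peval_nil.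
have m_le : (0 < m.+1 <= l.+1 + m)%N by rewrite ltn0Sn addSnnS leq_addl.
have S0 : l = 0%N -> peq (pderiv m.+1 (P (l.+1 + m))) [::].
  by move=> ->; apply: pderiv_Pk_ge; rewrite add1n.
have S_vars j' : (l.-1 <= j')%N ->
    peq (pderiv j' (pderiv m.+1 (P (l.+1 + m)))) [::].
  move=> lj'; have [l0|l_gt0] := posnP l; first exact: peq_pderiv _ (S0 l0).
  by rewrite addSnnS; apply: IHl.
have Psi0 : peq (pderiv j (Psi (l.+1 + m) (pderiv m.+1 (P (l.+1 + m))))) [::].
  apply: pderiv_Psi_peq_nil => [|j0|_]; first exact/S_vars/(leq_trans (leq_pred l)).
    by apply: S0; move: lj; rewrite j0 leqn0 => /eqP.
  by apply: S_vars; move: (leq_sub2r 1 lj); rewrite !subn1.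
rewrite addnS => x; rewrite (peq_pderiv j (pderiv_PkS m_le)) pderiv_cat peval_cat.
by rewrite IHm // Psi0 !peval_nil addr0.
Qed.

Definition peval_additive (L : poly -> R) :=
  (forall Q S, peq Q S -> L Q = L S) /\ (forall Q S, L (Q ++ S) = L Q + L S).

Lemma peval_additive_Psi d L :
  peval_additive L -> peval_additive (fun Q => L (Psi d Q)).
Proof.
case=> Lpeq Lcat; split=> [Q S QS|Q S]; first exact/Lpeq/peq_Psi.
by rewrite -Lcat; apply/Lpeq/Psi_cat.
Qed.

Lemma peval_additive_peq_nil L Q : peval_additive L -> peq Q [::] -> L Q = 0.
Proof.
case=> Lpeq Lcat Q0; rewrite (Lpeq _ _ Q0).
have := Lcat [::] [::]; rewrite cats0 => /eqP.
by rewrite eq_sym -subr_eq0 addrK => /eqP.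
Qed.

End PsiRecursion.

Section FiniteDifferences.
Context {R : archiRealFieldType}.
Implicit Types (a b : nat -> R) (c e : R).

Definition fdiff a : nat -> R := fun k => a k.+1 - a k.

Lemma iter_fdiff0 d : iter d fdiff (fun=> 0 : R) = fun=> 0.
Proof. by elim: d => //= d ->; apply/funext => k; rewrite /fdiff subrr. Qed.

Lemma near_iter_fdiff d a b : (\forall k \near \oo, a k = b k) ->
  \forall k \near \oo, iter d fdiff a k = iter d fdiff b k.
Proof.
case=> k1 _ ab; exists k1 => // k /= k1k.
elim: d k k1k => [|d IHd] k k1k /=; first exact: ab.
by rewrite /fdiff !IHd // (leq_trans k1k).
Qed.

Lemma near_ge_fdiff e b : 0 < e -> (\forall k \near \oo, e <= fdiff b k) ->
  \forall k \near \oo, e <= b k.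
Proof.
move=> e_gt0 [k1 _ eb].
have grow t : b k1 + t%:R * e <= b (k1 + t)%N.
  elim: t => [|t IHt]; first by rewrite mul0r addr0 addn0.
  have := eb (k1 + t)%N (leq_addr _ _); rewrite /fdiff addnS -natr1 mulrDl mul1r.
  lra.
pose N := Num.bound (`|e - b k1| / e).
have Ne : `|e - b k1| < N%:R * e.
  by rewrite -ltr_pdivrMr // archi_boundP // divr_ge0 // ltW.
exists (k1 + N)%N => // k /= kN.
have tN : N%:R * e <= (k - k1)%:R * e by rewrite ler_pM2r // ler_nat; lia.
have := grow (k - k1)%N; rewrite subnKC; last by lia.
have := ler_norm (e - b k1); lra.
Qed.

(* The margin e makes the induction work: increments at least e force growth. *)
Lemma iter_fdiff_trichotomy d a c : (\forall k \near \oo, iter d fdiff a k = c) ->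
  (\forall k \near \oo, a k = 0) \/
  exists2 e, 0 < e &
    (\forall k \near \oo, e <= a k) \/ (\forall k \near \oo, e <= - a k).
Proof.
have const_case b c' : (\forall k \near \oo, b k = c') ->
    (\forall k \near \oo, b k = 0) \/
    exists2 e, 0 < e &
      (\forall k \near \oo, e <= b k) \/ (\forall k \near \oo, e <= - b k).
  move=> [k1 _ bc]; have [c'0|c'0|c'0] := ltrgtP c' 0.
  - by right; exists (- c'); rewrite ?oppr_gt0 //; right; exists k1 => // k /= /bc ->.
  - by right; exists c' => //; left; exists k1 => // k /= /bc ->.
  - by left; exists k1 => // k /= /bc ->.
elim: d a c => [|d IHd] a c; first exact: const_case.
rewrite iterSr => /IHd [[k1 _ da0]|[e e_gt0 [da|da]]].
- apply: (const_case _ (a k1)); exists k1 => // k /= k1k.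
  rewrite -(subnKC k1k); elim: (k - k1)%N => [|t IHt]; first by rewrite addn0.
  by apply/eqP; rewrite addnS -subr_eq0 -IHt; apply/eqP/da0/leq_addr.
- by right; exists e => //; left; apply: near_ge_fdiff.
- right; exists e => //; right; apply: (near_ge_fdiff (b := fun k => - a k)) => //.
  by case: da => k1 _ da; exists k1 => // k /= /da; rewrite /fdiff; lra.
Qed.

Lemma iter_fdiff_near_neq0 d a c : (\forall k \near \oo, iter d fdiff a k = c) ->
  ~ (\forall k \near \oo, a k = 0) -> \forall k \near \oo, a k != 0.
Proof.
move=> /iter_fdiff_trichotomy [//|[e e_gt0 [[k1 _ ea]|[k1 _ ea]]] _];
  exists k1 => // k /= /ea; apply: contraTneq => ->; rewrite ?oppr0 -ltNge //.
Qed.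

Lemma iter_fdiff_not_near_eq0 d a c : (\forall k \near \oo, iter d fdiff a k = c) ->
  c != 0 -> ~ (\forall k \near \oo, a k = 0).
Proof.
move=> [k1 _ dac] c0 /(near_iter_fdiff d) [k2 _ da0].
have := dac (maxn k1 k2) (leq_maxl _ _).
by rewrite da0 /= ?leq_maxr // iter_fdiff0 => c0'; rewrite -c0' eqxx in c0.
Qed.

End FiniteDifferences.

Section PkDifferences.
Variables (R : archiRealFieldType) (n : nat) (A B : 'M[R]_n).
Local Notation P k := (Pk A B k).

(* Stated for every additive L because the induction step replaces L by L \o Psi d. *)
Lemma iter_fdiff_pderiv_Pk d L : peval_additive L ->
  \forall k \near \oo,
    iter d fdiff (fun k => L (pderiv (k - d.+1) (P k))) k = L (pmul_mxl B (P d)).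
Proof.
elim: d L => [|d IHd] L [Lpeq Lcat].
  exists 1%N => // -[//|k] _ /=; rewrite subSS subn0; apply: Lpeq => x.
  by rewrite pderiv_Pk_last -[[:: _]]/(pconst (B *m 1%:M)) !peval_pconst mulmx1.
have [k1 _ IH] := IHd _ (peval_additive_Psi A B d (conj Lpeq Lcat)).
have step : \forall k \near \oo, fdiff (fun k => L (pderiv (k - d.+2) (P k))) k =
                                 L (Psi A B d (pderiv (k - d.+1) (P k))).
  exists d.+2 => // k /= dk.
  have ck : (0 < k - d.+1 <= k)%N by lia.
  rewrite /fdiff subSS (Lpeq _ _ (pderiv_PkS A B ck)) Lcat -subnS addrAC subrr add0r.
  apply/Lpeq/Psi_widen => [j dj|]; last by rewrite ltnW // ltnW.
  have := @pderiv_pderiv_Pk _ _ A B d.+1 (k - d.+1) j (ltn0Sn d) dj.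
  by rewrite subnKC // ltnW.
have [k2 _ iter_step] := near_iter_fdiff d step.
exists (maxn k1 k2) => // k; rewrite iterSr /= geq_max => /andP [k1k k2k].
rewrite iter_step //; apply: eq_trans (IH k k1k) _.
exact/Lpeq/Psi_pmul_mxl.
Qed.

Lemma pderiv_Pk_profile L i : peval_additive L -> (0 < i)%N ->
  L (pmul_mxl B (P i.-1)) != 0 ->
  exists2 l, (0 < l)%N & \forall k \near \oo,
    L (pderiv (k - l) (P k)) != 0 /\
    forall l', (0 < l' < l)%N -> L (pderiv (k - l') (P k)) = 0.
Proof.
move=> L_add i_gt0 Li; pose a l k := L (pderiv (k - l) (P k)).
have a_diff l : (0 < l)%N ->
    \forall k \near \oo, iter l.-1 fdiff (a l) k = L (pmul_mxl B (P l.-1)).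
  by move=> l_gt0; have := iter_fdiff_pderiv_Pk l.-1 L_add; rewrite prednK.
have ex_l : exists l, (0 < l)%N && `[< ~ \forall k \near \oo, a l k = 0 >].
  exists i; rewrite i_gt0; apply/asboolP.
  exact: iter_fdiff_not_near_eq0 (a_diff i i_gt0) Li.
case: (ex_minnP ex_l) => l /andP [l_gt0 /asboolP al] l_min.
exists l => //.
have below : \forall k \near \oo, forall l' : 'I_l, (0 < l')%N -> a l' k = 0.
  apply: filter_forall => l'; have [l'0|l'_gt0] := posnP l'.
    by exists 0%N => // k _; rewrite l'0.
  have al' : \forall k \near \oo, a l' k = 0.
    apply: contrapT => nz; have := l_min l'; rewrite l'_gt0 asboolT //.
    by rewrite leqNgt ltn_ord => /(_ isT).
  by case: al' => k1 _ al'; exists k1 => // k /al'.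
have [k1 _ nz] := iter_fdiff_near_neq0 (a_diff l l_gt0) al.
case: below => k2 _ below; exists (maxn k1 k2) => // k /=.
rewrite geq_max => /andP [k1k k2k]; split; first exact: nz.
by move=> l' /andP [l'_gt0 l'l]; exact: (below k k2k (Ordinal l'l)).
Qed.

Lemma mxrank_trig_rowsub (F : fieldType) K N (J : 'M[F]_(K, N)) (g : 'I_N -> 'I_K) :
  is_trig_mx (rowsub g J)^T -> (forall j, J (g j) j != 0) -> \rank J = N.
Proof.
move=> trig diag; have rank_sub : \rank (rowsub g J) = N.
  apply: mxrank_unit; rewrite unitmxE unitfE -det_tr det_trig //.
  by apply/prodf_neq0 => j _; rewrite !mxE.
apply/eqP; rewrite eqn_leq rank_leq_col -{1}rank_sub mxrankS //.
exact: rowsub_sub.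
Qed.

(* The rows k0 + j - l (j < N) form a triangular minor with nonzero diagonal. *)
Lemma rank_pderiv_Pk_block L l k0 N (J : 'M[R]_(k0 + N, N)) : peval_additive L ->
  (0 < l <= k0)%N ->
  (forall k, (k0 <= k)%N -> L (pderiv (k - l) (P k)) != 0 /\
     forall l', (0 < l' < l)%N -> L (pderiv (k - l') (P k)) = 0) ->
  (forall c j, J c j = L (pderiv c (P (k0 + j)))) -> \rank J = N.
Proof.
move=> L_add /andP [l_gt0 lk0] prof J_def.
have col_lt (j : 'I_N) : (k0 + j - l < k0 + N)%N by have := ltn_ord j; lia.
apply: (mxrank_trig_rowsub (g := fun j => Ordinal (col_lt j))); last first.
  by move=> j; rewrite J_def; apply: (prof _ (leq_addr _ _)).1.
apply/is_trig_mxP => j j' jj'; rewrite !mxE J_def /=.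
have [kc|ck] := leqP (k0 + j) (k0 + j' - l).
  exact/(peval_additive_peq_nil L_add)/pderiv_Pk_ge.
have -> : (k0 + j' - l = k0 + j - (k0 + j - (k0 + j' - l)))%N by lia.
by apply: (prof _ (leq_addr _ _)).2; lia.
Qed.

End PkDifferences.

Lemma mxpowSr (R : comNzRingType) n (B : 'M[R]_n) m : mxpow B m.+1 = mxpow B m *m B.
Proof.
elim: m => [|m IHm]; first by rewrite /mxpow /= mulmx1 mul1mx.
by rewrite -[mxpow B m.+2]/(B *m mxpow B m.+1) [in LHS]IHm mulmxA.
Qed.

Section Jacobian.
Variables (R : realType) (n K N : nat) (u : 'rV[R]_n) (w0 : 'cV[R]_n).
Variable Q : 'I_N -> mpolyM R n.

Lemma seq_of_row_mx (v : nat -> R) i :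
  (i < K)%N -> seq_of_row (\row_(j < K) v j) i = v i.
Proof. by move=> iK; rewrite /seq_of_row insubT /= mxE. Qed.

Lemma differentiable_seq_of_row (p : 'rV[R]_K) i :
  differentiable (fun y : 'rV[R]_K => seq_of_row y i) p.
Proof.
by rewrite /seq_of_row; case: insubP => [j _ _|_]; first exact: differentiable_coord.
Qed.

Lemma is_derive_seq_of_row (p : 'rV[R]_K) (c : 'I_K) i :
  is_derive p (delta_mx 0 c) (fun y : 'rV[R]_K => seq_of_row y i) (i == c)%:R.
Proof.
rewrite /seq_of_row; case: insubP => [j _ ij|iK]; last first.
  have /negbTE -> : i != c by move: iK; apply: contraNneq => ->; exact: ltn_ord.
  exact: is_derive_cst.
have dj := @diff_derivable _ _ _ _ p (delta_mx 0 c) (differentiable_coord p 0 j).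
apply: is_derive_eq (derivableP dj) _.
have did : derivable (id : 'rV[R]_K -> 'rV[R]_K) p (delta_mx 0 c) by [].
have := derive_mx did.
by rewrite derive_id => /matrixP /(_ 0 j); rewrite !mxE -ij => <-.
Qed.

Lemma differentiable_row_peval (p : 'rV[R]_K) :
  differentiable (fun y : 'rV[R]_K =>
    \row_(j < N) mxform u w0 (peval (Q j) (seq_of_row y))) p.
Proof.
have -> : (fun y : 'rV[R]_K => \row_(j < N) mxform u w0 (peval (Q j) (seq_of_row y))) =
    \sum_(j < N) (fun y => mxform u w0 (peval (Q j) (seq_of_row y)) *: delta_mx 0 j).
  apply/funext => y; rewrite fct_sumE; apply/rowP => j.
  rewrite mxE summxE (bigD1 j) //= !mxE !eqxx mulr1 big1 ?addr0 // => j' j'j.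
  by rewrite !mxE eq_sym (negbTE j'j) andbF mulr0.
apply: differentiable_sum => j; apply: differentiableZl.
exact/differentiable_mxform_peval/differentiable_seq_of_row.
Qed.

Lemma jacobian_row_peval (v : nat -> R) c j : (forall j, pvars_lt K (Q j)) ->
  lin1_mx ('d (fun y : 'rV[R]_K =>
    \row_(j < N) mxform u w0 (peval (Q j) (seq_of_row y))) (\row_(i < K) v i)) c j
  = mxform u w0 (peval (pderiv c (Q j)) v).
Proof.
move=> QK; have dphi := differentiable_row_peval (\row_(i < K) v i).
rewrite mxE -deriveE // derive_mx ?mxE; last exact: diff_derivable.
under eq_fun do rewrite mxE.
have dQ := is_derive_mxform_peval (is_derive_seq_of_row (\row_(i < K) v i) c) u w0 (Q j).
rewrite (@derive_val _ _ _ _ _ _ _ dQ).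
congr mxform; apply: (eq_peval_pvars (pvars_lt_pderiv (QK j) (ltn_ord c))).
exact: seq_of_row_mx.
Qed.

End Jacobian.

Unset Implicit Arguments.

Theorem corollary4 (R : realType) (n : nat) (hn : (1 <= n)%N)
  (A B : 'M[R]_n) (C : 'M[R]_(1, n)) (v : nat -> R) (w0 : 'cV[R]_n) (m : nat) :
  (exists i : nat, (1 <= i)%N /\ CBPw C B m.+1 (Pk A B i.-1) v w0 != 0) ->
  exists k0 : nat, forall N : nat, (1 <= N)%N ->
    let phi := fun w : 'rV[R]_(k0 + N) =>
      \row_(j < N) CBPw C B m (Pk A B (k0 + j)) (seq_of_row w) w0 in
    let p := \row_(j < k0 + N) v j in
    differentiable phi p /\ \rank (lin1_mx ('d phi p)) = N.
Proof.
case=> i [i_gt0 CBi].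
pose L Q := mxform (C *m mxpow B m) w0 (peval Q v).
have L_add : peval_additive L.
  by split=> [Q S QS|Q S]; rewrite /L ?QS // peval_cat mxformD.
have Li : L (pmul_mxl B (Pk A B i.-1)) != 0.
  by rewrite /L peval_pmul_mxl /mxform mulmxA -(mulmxA C) -mxpowSr.
have [l l_gt0 [k1 _ prof]] := pderiv_Pk_profile L_add i_gt0 Li.
exists (maxn k1 l) => N _ phi p.
have Pk_vars (j : 'I_N) : pvars_lt (maxn k1 l + N) (Pk A B (maxn k1 l + j)).
  by apply: pvars_lt_le (pvars_lt_Pk A B _) _; rewrite leq_add2l ltnW.
split; first exact: differentiable_row_peval.
apply: (@rank_pderiv_Pk_block _ _ A B L l _ _ _ L_add).
- by rewrite l_gt0 leq_maxr.
- by move=> k /(leq_trans (leq_maxl _ _)) /prof.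
- by move=> c j; rewrite jacobian_row_peval.
Qed.
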